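(* Normalize $\operatorname{var}(X)=1$ and $\operatorname{var}(W_1)=I_{d_1}$, suppose $\operatorname{var}(Y,X,W_1)$ is positive definite, and let $\|c\|<1$. Then $\mathcal B(r_X,0,c)=\{\beta_{\text{med}}\}$ if and only if there exists $p_1\in\mathbb R^{d_1}$ with $(I+cr_X')p_1=\sigma_{W_1,X}$ and $(p_1'r_X)^2(1-\|c\|^2)<k_0$. In particular, $\mathcal B(r_X,0,c)=\{\beta_{\text{med}}\}$ whenever $r_X'c\ne-1$ and $z_X(r_X,c)^2<k_0$.
   Context: For random vectors $A,B$ with $\operatorname{var}(B)$ invertible, $A^{\perp B}=A-\operatorname{cov}(A,B)\operatorname{var}(B)^{-1}B$. $\sigma_{A,B}=\operatorname{cov}(A,B)$. $\beta_{\text{med}}$ is the coefficient on $X$ in the linear projection of $Y$ on $(1,X,W_1)$. $k_0=\operatorname{var}(X^{\perp W_1})$; $z_X(r_X,c)=\frac{r_X'\sigma_{W_1,X}\sqrt{1-\|c\|^2}}{1+r_X'c}$. For $r_X,r_Y,c\in\mathbb R^{d_1}$, $\mathcal B(r_X,r_Y,c)$ is the set of $b\in\mathbb R$ such that for some $(p_1,g_1)\in\mathbb R^{d_1}\times\mathbb R^{d_1}$ (with $\Sigma_{\text{obs}}=\operatorname{var}(W_1)$): $\operatorname{cov}(Y,X)=b\operatorname{var}(X)+g_1'(\Sigma_{\text{obs}}+cr_X'+r_Yc'+r_Yr_X')p_1$; $\operatorname{cov}(Y,W_1)=b\operatorname{cov}(X,W_1)+g_1'(\Sigma_{\text{obs}}+r_Yc')$;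 $\operatorname{cov}(X,W_1)=p_1'(\Sigma_{\text{obs}}+r_Xc')$; $\operatorname{var}(Y)>b^2\operatorname{var}(X)+g_1'(\Sigma_{\text{obs}}+r_Yr_Y'+2r_Yc')g_1+2bg_1'(\Sigma_{\text{obs}}+cr_X'+r_Yc'+r_Yr_X')p_1$; $\operatorname{var}(X)>p_1'(\Sigma_{\text{obs}}+2r_Xc'+r_Xr_X')p_1$; $1>c'\Sigma_{\text{obs}}^{-1}c$. *)

(* Second-moment data of (Y, X, W_1) represented by its
   covariance entries. *)
From mathcomp Require Import all_boot all_order all_algebra.
Set Implicit Arguments. Unset Strict Implicit. Unset Printing Implicit Defensive.
Import Order.TTheory GRing.Theory Num.Theory.
Local Open Scope ring_scope.

Definition sc {R : pzRingType} (M : 'M[R]_1) : R := M ord0 ord0.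

Definition vnorm {R : rcfType} {d : nat} (v : 'cV[R]_d) : R :=
  Num.sqrt (sc (v^T *m v)).

Definition posdef {R : numDomainType} {n : nat} (M : 'M[R]_n) : Prop :=
  forall v : 'cV[R]_n, v != 0 -> 0 < sc (v^T *m M *m v).

(* var(Y, X, W_1) in the order (Y, X, W_1), built from
   varY = var(Y), sYX = cov(Y,X), varX = var(X),
   sYW = cov(Y,W_1) (a 1 x d row), sXW = cov(X,W_1) (a 1 x d row),
   Sig = var(W_1). *)
Definition covmat {R : pzRingType} {d : nat} (varY sYX varX : R)
  (sYW sXW : 'rV[R]_d) (Sig : 'M[R]_d) : 'M[R]_(2 + d) :=
  block_mx (\matrix_(i < 2, j < 2)
             (if (val i == 0%N) && (val j == 0%N) then varY
              else if (val i == 1%N) && (val j == 1%N) then varX else sYX))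
           (col_mx sYW sXW) (row_mx sYW^T sXW^T) Sig.

Definition inB {R : realFieldType} {d : nat} (varY sYX varX : R)
  (sYW sXW : 'rV[R]_d) (Sig : 'M[R]_d) (rX rY c : 'cV[R]_d) (b : R) : Prop :=
  exists p1 g1 : 'cV[R]_d,
  [/\ sYX = b * varX
            + sc (g1^T *m (Sig + c *m rX^T + rY *m c^T + rY *m rX^T) *m p1),
      sYW = b *: sXW + g1^T *m (Sig + rY *m c^T),
      sXW = p1^T *m (Sig + rX *m c^T) /\
      (b ^+ 2 * varX
        + sc (g1^T *m (Sig + rY *m rY^T + 2%:R *: (rY *m c^T)) *m g1)
        + 2%:R * b * sc (g1^T *m (Sig + c *m rX^T + rY *m c^T + rY *m rX^T) *m p1)
        < varY),
      (sc (p1^T *m (Sig + 2%:R *: (rX *m c^T) + rX *m rX^T) *m p1) < varX) &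
      (sc (c^T *m invmx Sig *m c) < 1)].

(* k_0 = var(X^{perp W_1}) *)
Definition k0 {R : realFieldType} {d : nat} (varX : R) (sXW : 'rV[R]_d)
  (Sig : 'M[R]_d) : R :=
  varX - sc (sXW *m invmx Sig *m sXW^T).

(* beta_med = cov(Y, X^{perp W_1}) / var(X^{perp W_1}), the coefficient on X
   in the linear projection of Y on (1, X, W_1) *)
Definition beta_med {R : realFieldType} {d : nat} (sYX varX : R)
  (sYW sXW : 'rV[R]_d) (Sig : 'M[R]_d) : R :=
  (sYX - sc (sYW *m invmx Sig *m sXW^T)) / k0 varX sXW Sig.

Definition zX {R : rcfType} {d : nat} (sXW : 'rV[R]_d) (rX c : 'cV[R]_d) : R :=
  sc (rX^T *m sXW^T) * Num.sqrt (1 - vnorm c ^+ 2) / (1 + sc (rX^T *m c)).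

From mathcomp Require Import all_boot all_order all_algebra.
From mathcomp Require Import ring lra.
Set Implicit Arguments. Unset Strict Implicit. Unset Printing Implicit Defensive.
Import Order.TTheory GRing.Theory Num.Theory.
Local Open Scope ring_scope.

(* With var(W_1) = I and r_Y = 0, the second constraint defining B(r_X, 0, c)
   forces g_1 = sigma_{W_1,Y} - b sigma_{W_1,X} and the third one says
   (I + c r_X') p_1 = sigma_{W_1,X}; substituting both into the first gives
   b k_0 = sigma_{Y,X} - sigma_{Y,W_1} sigma_{W_1,X}, i.e. b = beta_med.
   At b = beta_med the variance constraint on Y states that the residual of the
   projection of Y on (X, W_1) has positive variance, which holds by positive
   definiteness.  Since
     p_1'(I + 2 r_X c' + r_X r_X') p_1 = |(I + c r_X') p_1|^2 + (p_1'r_X)^2 (1 - |c|^2),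
   the variance constraint on X becomes (p_1'r_X)^2 (1 - |c|^2) < k_0.  When
   r_X'c <> -1 the rank-one system is solved by
   p_1 = sigma_{W_1,X} - (r_X'sigma_{W_1,X} / (1 + r_X'c)) c, for which
   (p_1'r_X)^2 (1 - |c|^2) = z_X(r_X, c)^2. *)

Section ScalarEntry.
Variable R : pzRingType.
Implicit Types A B : 'M[R]_1.

Lemma scD A B : sc (A + B) = sc A + sc B. Proof. by rewrite /sc mxE. Qed.
Lemma scN A : sc (- A) = - sc A. Proof. by rewrite /sc mxE. Qed.
Lemma scB A B : sc (A - B) = sc A - sc B. Proof. by rewrite scD scN. Qed.
Lemma scZ (a : R) A : sc (a *: A) = a * sc A. Proof. by rewrite /sc mxE. Qed.
Lemma sc_scalar (a : R) : sc (a%:M : 'M_1) = a. Proof. by rewrite /sc mxE. Qed.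
Lemma scM A B : sc (A *m B) = sc A * sc B. Proof. by rewrite /sc mxE big_ord1. Qed.
Lemma sc_tr A : sc A^T = sc A. Proof. by rewrite /sc mxE. Qed.

Lemma scalar_mx1_eq0 (a : R) : (a%:M == 0 :> 'M_1) = (a == 0).
Proof.
apply/eqP/eqP => [/matrixP/(_ ord0 ord0)|->]; last exact: raddf0.
by rewrite !mxE.
Qed.

Definition col3 d (x y : R) (w : 'cV[R]_d) : 'cV[R]_(1 + 1 + d) :=
  col_mx (col_mx x%:M y%:M) w.

Lemma col3_eq0 d x y (w : 'cV[R]_d) :
  (col3 x y w == 0) = [&& x == 0, y == 0 & w == 0].
Proof. by rewrite /col3 !col_mx_eq0 !scalar_mx1_eq0 andbA. Qed.

End ScalarEntry.

Section ComScalarEntry.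
Variable R : comPzRingType.

Lemma sc_mulmx_tr n (A : 'M[R]_(1, n)) (B : 'M[R]_(n, 1)) :
  sc (A *m B) = sc (B^T *m A^T).
Proof. by rewrite -trmx_mul sc_tr. Qed.

Lemma mulmx_mx11 n (A : 'M[R]_(n, 1)) (B : 'M[R]_1) : A *m B = sc B *: A.
Proof. by rewrite {1}(mx11_scalar B) mul_mx_scalar. Qed.

Lemma trmx_mul_rank_one_update d (p u v : 'cV[R]_d) :
  (p^T *m (1%:M + u *m v^T))^T = (1%:M + v *m u^T) *m p.
Proof. by rewrite trmx_mul trmxK linearD /= tr_scalar_mx trmx_mul trmxK. Qed.

Lemma quad_rank_one_update d (p r c : 'cV[R]_d) :
  sc (p^T *m (1%:M + 2%:R *: (r *m c^T) + r *m r^T) *m p) =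
  sc (((1%:M + c *m r^T) *m p)^T *m ((1%:M + c *m r^T) *m p))
  + sc (p^T *m r) ^+ 2 * (1 - sc (c^T *m c)).
Proof.
rewrite mulmxDl mul1mx -(mulmxA c) (mulmx_mx11 c).
rewrite [(p + _)^T]linearD /= linearZ /=.
rewrite !mulmxDl !mulmxDr mulmx1 -!scalemxAl -!scalemxAr !scD !scZ.
rewrite !mulmxDl -!scalemxAl !scD !scZ !mulmxA -(mulmxA _ c^T) -(mulmxA _ r^T) !scM.
rewrite (sc_mulmx_tr r^T) (sc_mulmx_tr p^T c) !trmxK.
ring.
Qed.

Lemma covmatE d (varY sYX varX : R) sYW sXW (Sig : 'M[R]_d) :
  covmat varY sYX varX sYW sXW Sig =
  block_mx (block_mx (varY%:M : 'M_1) sYX%:M sYX%:M varX%:M : 'M_(1 + 1))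
           (col_mx sYW sXW) (row_mx sYW^T sXW^T) Sig.
Proof.
congr block_mx; apply/matrixP => -[[|[|i]] Hi] // -[[|[|j]] Hj] //.
all: by rewrite !mxE; do 2?[rewrite /split; case: ltnP => //= ?; rewrite !mxE /=].
Qed.

Lemma covmat_quad_form d (varY sYX varX : R) sYW sXW (Sig : 'M[R]_d) x y w :
  sc ((col3 x y w)^T *m covmat varY sYX varX sYW sXW Sig *m col3 x y w) =
  x ^+ 2 * varY + 2 * x * y * sYX + y ^+ 2 * varX
  + 2 * x * sc (sYW *m w) + 2 * y * sc (sXW *m w) + sc (w^T *m Sig *m w).
Proof.
rewrite covmatE /col3 !tr_col_mx !tr_scalar_mx !mul_row_block !mul_row_col.
rewrite !mulmxDl !scD -!mulmxA !(@mul_row_col _ _ 1 1) !mul_scalar_mx !mulmxDr !scD.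
rewrite !mul_mx_scalar -!scalemxAr !scZ !scD !scZ !sc_scalar.
rewrite [sc (w^T *m sYW^T)]sc_mulmx_tr [sc (w^T *m sXW^T)]sc_mulmx_tr !trmxK.
ring.
Qed.

(* [v] holds the coefficients of Y - b X - (sYW - b sXW) W_1. *)
Lemma covmat_unit_residual_quad d (varY sYX varX : R) (sYW sXW : 'rV[R]_d) (b : R) :
  let v := col3 1 (- b) (- (sYW - b *: sXW)^T) in
  sc (v^T *m covmat varY sYX varX sYW sXW 1%:M *m v) =
  varY - 2 * b * (sYX - sc (sYW *m sXW^T))
  + b ^+ 2 * (varX - sc (sXW *m sXW^T)) - sc (sYW *m sYW^T).
Proof.
rewrite /= covmat_quad_form mulmx1 !mulmxN linearN /= mulNmx opprK !scN trmxK.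
rewrite [(sYW - _)^T]linearB /= [(b *: sXW)^T]linearZ /=.
rewrite !(mulmxBr, mulmxBl) -!scalemxAr -!scalemxAl !scB !scZ.
rewrite [sc (sXW *m sYW^T)]sc_mulmx_tr trmxK.
ring.
Qed.

End ComScalarEntry.

Section UnitCovariance.
Variables (R : realFieldType) (d : nat) (varY sYX varX : R) (sYW sXW : 'rV[R]_d).

Local Notation k := (k0 varX sXW 1%:M).
Local Notation bm := (beta_med sYX varX sYW sXW 1%:M).

Lemma k0_unitE : k = varX - sc (sXW *m sXW^T).
Proof. by rewrite /k0 invmx1 mulmx1. Qed.

Lemma beta_med_unitE : bm = (sYX - sc (sYW *m sXW^T)) / k.
Proof. by rewrite /beta_med invmx1 mulmx1. Qed.

Hypothesis posdef_cov : posdef (covmat varY sYX varX sYW sXW 1%:M).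

Lemma k0_unit_gt0 : 0 < k.
Proof.
have := posdef_cov (v := col3 0 1 (- sXW^T)).
rewrite col3_eq0 oner_eq0 andbF => /(_ isT).
rewrite covmat_quad_form mulmx1 !mulmxN linearN /= mulNmx trmxK opprK !scN k0_unitE.
lra.
Qed.

Lemma beta_med_residual_var : bm ^+ 2 * k + sc (sYW *m sYW^T) < varY.
Proof.
have sYX_bm : sYX - sc (sYW *m sXW^T) = bm * k.
  by rewrite beta_med_unitE divfK ?gt_eqF ?k0_unit_gt0.
have := posdef_cov (v := col3 1 (- bm) (- (sYW - bm *: sXW)^T)).
rewrite col3_eq0 oner_eq0 /= => /(_ isT).
rewrite covmat_unit_residual_quad sYX_bm -k0_unitE.
lra.
Qed.

End UnitCovariance.

Section MediationSet.
Variables (R : realFieldType) (d : nat) (varY sYX varX : R) (sYW sXW : 'rV[R]_d).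
Variables rX c : 'cV[R]_d.

Local Notation k := (k0 varX sXW 1%:M).
Local Notation bm := (beta_med sYX varX sYW sXW 1%:M).
Local Notation inB0 := (inB varY sYX varX sYW sXW 1%:M rX 0 c).

Lemma var_X_constraint_unitE p1 : (1%:M + c *m rX^T) *m p1 = sXW^T ->
  (sc (p1^T *m (1%:M + 2%:R *: (rX *m c^T) + rX *m rX^T) *m p1) < varX) =
  (sc (p1^T *m rX) ^+ 2 * (1 - sc (c^T *m c)) < k).
Proof. by move=> Hp1; rewrite quad_rank_one_update Hp1 trmxK k0_unitE ltrBrDl. Qed.

Lemma inB_unit_rY0 b : k != 0 -> inB0 b ->
  b = bm /\ exists p1, (1%:M + c *m rX^T) *m p1 = sXW^T
                      /\ sc (p1^T *m rX) ^+ 2 * (1 - sc (c^T *m c)) < k.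
Proof.
move=> k_neq0 [p1 [g1 [cov_YX cov_YW [cov_XW _] var_X _]]].
rewrite !mul0mx !addr0 !mulmx1 in cov_YX cov_YW cov_XW var_X.
have Hp1 : (1%:M + c *m rX^T) *m p1 = sXW^T.
  by rewrite cov_XW trmx_mul_rank_one_update.
have Hg1 : g1^T = sYW - b *: sXW by rewrite cov_YW addrC addKr.
split; last by exists p1; rewrite -var_X_constraint_unitE.
move: cov_YX; rewrite -mulmxA Hp1 Hg1 mulmxBl -scalemxAl scB scZ.
rewrite beta_med_unitE k0_unitE in k_neq0 * => ->.
by field.
Qed.

Lemma beta_med_inB_unit_rY0 p1 : k != 0 ->
  bm ^+ 2 * k + sc (sYW *m sYW^T) < varY -> sc (c^T *m c) < 1 ->
  (1%:M + c *m rX^T) *m p1 = sXW^T ->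
  sc (p1^T *m rX) ^+ 2 * (1 - sc (c^T *m c)) < k ->
  inB0 bm.
Proof.
move=> k_neq0 var_Y c_lt1 Hp1 var_X.
have cov_XW : sXW = p1^T *m (1%:M + rX *m c^T).
  by apply: trmx_inj; rewrite trmx_mul_rank_one_update.
have sXW_g (g : 'rV[R]_d) : sc (g *m (1%:M + c *m rX^T) *m p1) = sc (g *m sXW^T).
  by rewrite -mulmxA Hp1.
exists p1, (sYW - bm *: sXW)^T; rewrite trmxK.
rewrite invmx1 !mul0mx scaler0 !addr0 !mulmx1 sXW_g.
rewrite var_X_constraint_unitE //; split => //.
- rewrite mulmxBl -scalemxAl scB scZ beta_med_unitE.
  by rewrite k0_unitE in k_neq0 *; field.
- by rewrite addrC subrK.
- split => //; move: var_Y; rewrite k0_unitE.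
  rewrite [(sYW - _)^T]linearB /= [(bm *: sXW)^T]linearZ /=.
  rewrite !(mulmxBr, mulmxBl) -!scalemxAr -!scalemxAl !scB !scZ.
  rewrite [sc (sXW *m sYW^T)]sc_mulmx_tr trmxK.
  lra.
Qed.

Lemma inB_unit_rY0P : posdef (covmat varY sYX varX sYW sXW 1%:M) ->
  sc (c^T *m c) < 1 ->
  forall b, inB0 b <->
    b = bm /\ exists p1, (1%:M + c *m rX^T) *m p1 = sXW^T
                        /\ sc (p1^T *m rX) ^+ 2 * (1 - sc (c^T *m c)) < k.
Proof.
move=> posdef_cov c_lt1 b.
have k_neq0 : k != 0 := lt0r_neq0 (k0_unit_gt0 posdef_cov).
split; first exact: inB_unit_rY0.
move=> [-> [p1 [Hp1 var_X]]].
exact: beta_med_inB_unit_rY0 k_neq0 (beta_med_residual_var posdef_cov) c_lt1 Hp1 var_X.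
Qed.

End MediationSet.

Lemma singleton_and_iff (T : Type) (Q : T -> Prop) (b0 : T) (P : Prop) :
  (forall b, Q b <-> b = b0 /\ P) -> ((forall b, Q b <-> b = b0) <-> P).
Proof.
move=> QE; split => [/(_ b0)|p b]; rewrite QE; first by case=> _ /(_ erefl) [].
by split=> [[]|->].
Qed.

Lemma rank_one_update_solvable (R : fieldType) d (s r c : 'cV[R]_d) :
  1 + sc (r^T *m c) != 0 ->
  exists p, (1%:M + c *m r^T) *m p = s
            /\ sc (p^T *m r) = sc (r^T *m s) / (1 + sc (r^T *m c)).
Proof.
move=> e_neq0; set a := sc (r^T *m s) / _.
have r_p : sc (r^T *m (s - a *: c)) = a.
  by rewrite mulmxBr -scalemxAr scB scZ /a; field.
exists (s - a *: c); split; last by rewrite sc_mulmx_tr trmxK.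
by rewrite mulmxDl mul1mx -mulmxA (mulmx_mx11 c) r_p subrK.
Qed.

Lemma sc_tr_mul_ge0 (R : realDomainType) d (c : 'cV[R]_d) : 0 <= sc (c^T *m c).
Proof. by rewrite /sc mxE sumr_ge0 // => i _; rewrite mxE -expr2 sqr_ge0. Qed.

Section Norm.
Variable R : rcfType.

Lemma vnorm_ge0 d (c : 'cV[R]_d) : 0 <= vnorm c.
Proof. exact: sqrtr_ge0. Qed.

Lemma vnorm_sqr d (c : 'cV[R]_d) : vnorm c ^+ 2 = sc (c^T *m c).
Proof. by rewrite sqr_sqrtr ?sc_tr_mul_ge0. Qed.

Lemma zX_sqr d (sXW : 'rV[R]_d) (rX c : 'cV[R]_d) : vnorm c <= 1 ->
  zX sXW rX c ^+ 2 =
  (sc (rX^T *m sXW^T) / (1 + sc (rX^T *m c))) ^+ 2 * (1 - vnorm c ^+ 2).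
Proof.
move=> c_le1; rewrite /zX mulrAC exprMn sqr_sqrtr // subr_ge0.
by rewrite exprn_ile1 ?vnorm_ge0.
Qed.

End Norm.

Theorem mainTheorem20 (R : rcfType) (d1 : nat) (varY sYX : R)
  (sYW sXW : 'rV[R]_d1) (rX c : 'cV[R]_d1) :
  (* normalization var(X) = 1, var(W_1) = I; var(Y,X,W_1) positive definite *)
  posdef (covmat varY sYX 1 sYW sXW 1%:M) ->
  vnorm c < 1 ->
  ((forall b : R, inB varY sYX 1 sYW sXW 1%:M rX 0 c b
                  <-> b = beta_med sYX 1 sYW sXW 1%:M)
   <-> exists p1 : 'cV[R]_d1,
         (1%:M + c *m rX^T) *m p1 = sXW^T
         /\ (sc (p1^T *m rX)) ^+ 2 * (1 - vnorm c ^+ 2) < k0 1 sXW 1%:M)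
  /\
  (sc (rX^T *m c) != -1 ->
   zX sXW rX c ^+ 2 < k0 1 sXW 1%:M ->
   forall b : R, inB varY sYX 1 sYW sXW 1%:M rX 0 c b
                 <-> b = beta_med sYX 1 sYW sXW 1%:M).
Proof.
move=> posdef_cov c_lt1.
have cc_lt1 : sc (c^T *m c) < 1 by rewrite -vnorm_sqr expr_lt1 ?vnorm_ge0.
have singletonE := singleton_and_iff (inB_unit_rY0P rX posdef_cov cc_lt1).
rewrite vnorm_sqr; split => // e_neq zX_lt; apply/singletonE.
have e1_neq0 : 1 + sc (rX^T *m c) != 0 by rewrite addrC addr_eq0.
have [p1 [Hp1 p1_rX]] := rank_one_update_solvable sXW^T e1_neq0.
by exists p1; rewrite p1_rX -vnorm_sqr -zX_sqr ?ltW.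
Qed.
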